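(* Let $T\ge 1$ and $n_w\ge 0$ be integers, let $C>0$, and let $q_1,\dots,q_T\in\mathbb{R}$. For $\mathbf{u}=(u_1,\dots,u_T)\in\mathbb{R}^T$ and $i=1,\dots,T$ write $\mathbf{u}_i=(u_{i-n_w},\dots,u_i)$, where entries with index $\le 0$ are fixed constants (not decision variables). Let $J_i:\mathbb{R}\to\mathbb{R}$ ($i=1,\dots,T$) be continuously differentiable and increasing, and let $f_i:\mathbb{R}^{n_w+1}\to\mathbb{R}$ ($i=1,\dots,T$) be continuously differentiable and non-decreasing in each of their arguments. Define the penalty function $$\hat J(\mathbf{u})=\sum_{i=1}^T\Big(J_i(u_i)+C\big(f_i(\mathbf{u}_i)-q_i\big)^2\Big)$$ on $\mathbb{R}^T$. Then at any (unconstrained, local) minimum $\mathbf{u}^*$ of $\hat J$, at least one of the inequality constraints $f_i(\mathbf{u}^*_i)-q_i\ge 0$, $i=1,\dots,T$, is violated.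
   Context: ''Increasing'' for a differentiable function means its derivative is strictly positive; ''non-decreasing'' means all its partial derivatives are non-negative. The penalty function arises from the constrained problem $\min J(\mathbf{u})=\sum_i J_i(u_i)$ subject to $f_i(\mathbf{u}_i)\ge q_i$, $i=1,\dots,T$. *)

From HB Require Import structures.
From mathcomp Require Import all_boot all_order all_algebra.
From mathcomp Require Import all_classical all_reals all_analysis.
Set Implicit Arguments. Unset Strict Implicit. Unset Printing Implicit Defensive.
Import Order.TTheory GRing.Theory Num.Theory.
Import numFieldNormedType.Exports.
Local Open Scope ring_scope.

Definition rowget (R : realType) (T : nat) (u : 'rV[R]_T) (m : nat) : R :=
  match @insub nat (fun m => (m < T)%N) 'I_T m with
  | Some j => u ord0 j
  | None => 0
  end.

(* Extended sequence, shifted by n_w: position s < n_w holds the fixed constant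
   c s (= u_{s - n_w + 1}, an index <= 0); position s >= n_w holds the decision
   variable u_{s - n_w + 1}, i.e. the (s - n_w)-th (0-based) entry of u. *)
Definition ext (R : realType) (T nw : nat) (c : nat -> R) (u : 'rV[R]_T) (s : nat) : R :=
  if (s < nw)%N then c s else rowget u (s - nw).

(* For the 0-based index i (paper index i+1): u_{i+1} = (u_{i+1-nw}, ..., u_{i+1}). *)
Definition window (R : realType) (T nw : nat) (c : nat -> R) (u : 'rV[R]_T) (i : 'I_T)
  : 'rV[R]_nw.+1 := \row_(k < nw.+1) ext nw c u (i + k).

Definition partial (R : realType) (m : nat) (j : 'I_m) (g : 'rV[R]_m -> R) (x : 'rV[R]_m) : R :=
  'D_(delta_mx ord0 j) g x.

Definition C1_scalar (R : realType) (g : R -> R) : Prop :=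
  (forall x, derivable g x 1) /\ continuous (derive1 g).

Definition C1_vec (R : realType) (m : nat) (g : 'rV[R]_m -> R) : Prop :=
  (forall x, differentiable g x) /\ (forall j : 'I_m, continuous (partial j g)).

Definition Jhat (R : realType) (T nw : nat) (c : nat -> R) (J : 'I_T -> R -> R)
  (f : 'I_T -> 'rV[R]_nw.+1 -> R) (q : 'I_T -> R) (C : R) (u : 'rV[R]_T) : R :=
  \sum_(i < T) (J i (u ord0 i) + C * (f i (window nw c u i) - q i) ^+ 2).

From HB Require Import structures.
From mathcomp Require Import all_boot all_order all_algebra.
From mathcomp Require Import all_classical all_reals all_analysis.
From mathcomp Require Import zify.
Import Order.TTheory GRing.Theory Num.Theory.
Import numFieldNormedType.Exports.
Local Open Scope ring_scope.

(* Perturb only the last decision variable u_T.  It enters the penalty only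
   through J_T(u_T) and as the last argument of f_T, so along the line
   u* + t e_T the derivative of the penalty at t = 0 is
   J_T'(u_T) + 2 C (f_T(u*_T) - q_T) D f_T, with D f_T the partial derivative
   of f_T in its last argument.  At a local minimum this vanishes; since
   J_T' > 0 and D f_T >= 0, it forces f_T(u*_T) < q_T: the last constraint is
   always the violated one. *)

Lemma is_derive_line {R : numFieldType} {V : normedModType R} (F : V -> R) (x v : V) (t : R) :
  derivable F (t *: v + x) v ->
  is_derive t 1 (fun s => F (s *: v + x)) ('D_v F (t *: v + x)).
Proof.
move=> dF.
have quotE : (fun h : R => h^-1 *: (((fun s => F (s *: v + x)) \o shift t) (h *: 1) - F (t *: v + x)))
   = (fun h : R => h^-1 *: ((F \o shift (t *: v + x)) (h *: v) - F (t *: v + x))).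
  apply/funext => h /=; congr (_ *: (F _ - _)).
  by rewrite [h *: 1]mulr1 scalerDl addrA.
by apply: DeriveDef; rewrite /derivable /derive quotE.
Qed.

Lemma local_min_derive_eq0 {R : realFieldType} {g g' : R -> R} {x : R} :
  (forall t : R, is_derive t 1 g (g' t)) -> (\forall t \near x, g x <= g t) -> g' x = 0.
Proof.
move=> dg /nbhs_ballP[r r0 xmin].
have : is_derive x 1 g 0.
  apply: (@derive1_at_min _ g (x - r) (x + r)).
  - by rewrite lerD2l ge0_cp // ltW.
  - by move=> t _; exact: @ex_derive _ _ _ _ _ _ _ (dg t).
  - by rewrite in_itv /= ltrDl r0 gtrBl r0.
  move=> t; rewrite in_itv /= => /andP[xrt txr]; apply: xmin.
  by rewrite /ball /= ltr_distlC xrt txr.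
by move=> d0; rewrite -(@derive_val _ _ _ _ _ _ _ (dg x)) derive_val.
Qed.

Lemma local_min_along {R : realFieldType} {V : normedModType R} (g : V -> R) (x v : V) :
  (\forall y \near x, g x <= g y) -> \forall t \near (0 : R), g x <= g (x + t *: v).
Proof.
have line_cvg : ((fun t : R => x + t *: v) @ (0 : R) --> x)%classic.
  rewrite -[X in (_ --> X)%classic]addr0 -[X in (_ --> _ + X)%classic](scale0r v).
  by apply: cvgD; [exact: cvg_cst | exact: scalel_continuous].
exact: line_cvg.
Qed.

Lemma rowget_add_delta (R : realType) (T : nat) (L : 'I_T) (u : 'rV[R]_T) (t : R) (m : nat) :
  rowget (u + t *: delta_mx ord0 L) m = rowget u m + t * (m == L)%:R.
Proof.
rewrite /rowget; case: insubP => [j jT jm|].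
  by rewrite !mxE eqxx /= -jm (inj_eq val_inj) eq_sym.
move=> m_out; rewrite add0r; case: eqP => [mL|]; last by rewrite mulr0.
by move: m_out; rewrite mL ltn_ord.
Qed.

Lemma window_add_delta_last (R : realType) (T nw : nat) (c : nat -> R) (L : 'I_T)
  (u : 'rV[R]_T) (t : R) (i : 'I_T) : L.+1 = T ->
  window nw c (u + t *: delta_mx ord0 L) i =
  window nw c u i + (t * (i == L)%:R) *: delta_mx ord0 ord_max.
Proof.
move=> lastL; apply/rowP => k; rewrite !mxE /ext eqxx /=.
have iT := ltn_ord i; have kn := ltn_ord k.
case: ifP => [ik_fixed | ik_free].
  have -> : (k == ord_max) = false by apply/eqP => kmax; rewrite kmax /= in ik_fixed; lia.
  by rewrite mulr0 addr0.
rewrite rowget_add_delta -mulrA -natrM mulnb; congr (_ + t * (nat_of_bool _)%:R).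
apply/idP/andP => [/eqP ikL | [/eqP iL /eqP kmax]].
  split; apply/eqP/val_inj => /=; move: ik_free; lia.
by rewrite iL kmax /= addnK.
Qed.

Section PenaltyAlongLastVariable.
Context {R : realType} {T nw : nat}.
Variables (c : nat -> R) (J : 'I_T -> R -> R)
  (f : 'I_T -> 'rV[R]_nw.+1 -> R) (q : 'I_T -> R) (C : R) (L : 'I_T) (u : 'rV[R]_T).
Hypothesis lastL : L.+1 = T.

Definition last_term (t : R) : R :=
  J L (t *: 1 + u ord0 L) +
  C * (f L (t *: delta_mx ord0 ord_max + window nw c u L) - q L) ^+ 2.

Lemma Jhat_add_delta_last (t : R) :
  Jhat c J f q C (u + t *: delta_mx ord0 L) =
  \sum_(i < T | i != L) (J i (u ord0 i) + C * (f i (window nw c u i) - q i) ^+ 2)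
  + last_term t.
Proof.
rewrite /Jhat (bigD1 L) //= addrC; congr (_ + _).
  apply: eq_bigr => i iL.
  rewrite window_add_delta_last // !mxE eqxx /=; move: iL; case: eqP => // _ _.
  by rewrite !mulr0 scale0r !addr0.
rewrite window_add_delta_last // !mxE !eqxx /= !mulr1 /last_term.
congr (J L _ + _); first by rewrite [t%:A]mulr1 addrC.
by rewrite [_ + t *: _]addrC.
Qed.

Lemma last_term_local_min :
  (\forall v \near u, Jhat c J f q C u <= Jhat c J f q C v) ->
  \forall t \near (0 : R), last_term 0 <= last_term t.
Proof.
move=> /(local_min_along _ _ (delta_mx ord0 L)); apply: filterS => t.
have := Jhat_add_delta_last 0; rewrite scale0r addr0 => ->.
by rewrite Jhat_add_delta_last lerD2l.
Qed.

Lemma is_derive_last_term (t : R) :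
  (forall x, derivable (J L) x 1) -> (forall x, differentiable (f L) x) ->
  is_derive t 1 last_term
    (derive1 (J L) (t *: 1 + u ord0 L) +
     C * (2 * (f L (t *: delta_mx ord0 ord_max + window nw c u L) - q L)
          * partial ord_max (f L) (t *: delta_mx ord0 ord_max + window nw c u L))).
Proof.
move=> dJ df.
have dline := is_derive_line (f L) (window nw c u L) (delta_mx ord0 ord_max) t
  (diff_derivable (df _)).
have dsquare := is_deriveX 2 (is_deriveB dline (is_derive_cst (q L) t 1)).
apply: is_derive_eq.
  exact: is_deriveD (is_derive_line (J L) (u ord0 L) 1 t (dJ _)) (is_deriveZ C dsquare).
by rewrite derive1E /partial !fctE subr0 expr1.
Qed.

End PenaltyAlongLastVariable.

Theorem proposition2 (R : realType) (T nw : nat) (C : R) (q : 'I_T -> R)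
  (c : nat -> R) (J : 'I_T -> R -> R) (f : 'I_T -> 'rV[R]_nw.+1 -> R)
  (ustar : 'rV[R]_T) :
  (0 < T)%N -> 0 < C ->
  (forall i, C1_scalar (J i)) ->
  (forall i x, 0 < derive1 (J i) x) ->
  (forall i, C1_vec (f i)) ->
  (forall i x (j : 'I_nw.+1), 0 <= partial j (f i) x) ->
  (\forall v \near ustar, Jhat c J f q C ustar <= Jhat c J f q C v) ->
  exists i : 'I_T, f i (window nw c ustar i) - q i < 0.
Proof.
move=> T_gt0 C_gt0 J_C1 J_incr f_C1 f_nondecr ustar_min.
have [L lastL] : exists L : 'I_T, L.+1 = T.
  have lastT : (T.-1 < T)%N by rewrite ltn_predL.
  by exists (Ordinal lastT); rewrite /= prednK.
exists L; rewrite ltNge; apply/negP => feasible.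
have dJ x : derivable (J L) x 1 by case: (J_C1 L) => + _; apply.
have df x : differentiable (f L) x by case: (f_C1 L) => + _; apply.
have dlast t := is_derive_last_term c J f q C L ustar t dJ df.
have := local_min_derive_eq0 dlast (last_term_local_min c J f q C L ustar lastL ustar_min).
rewrite !scale0r !add0r => /eqP; apply/negP; rewrite gt_eqF //.
by rewrite ltr_wpDr ?J_incr // mulr_ge0 ?(ltW C_gt0) // !mulr_ge0 ?f_nondecr.
Qed.
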